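(* If $P\in k(t)\langle\partial_t\rangle$ is irreducible in $k(t)\langle\partial_t\rangle$, then $P$ is irreducible in $K\langle\partial_t\rangle$, i.e. $P$ has no right-hand factor $Q\in K\langle\partial_t\rangle$ with $1\le{\rm ord}(Q)<{\rm ord}(P)$.
   Context: $k$ is an algebraically closed field of characteristic zero and $K=k(t,x_1,\dots,x_n)$; $K\langle\partial_t\rangle$ (resp. $k(t)\langle\partial_t\rangle$) is the ring of linear differential operators in $\partial_t=\partial/\partial t$ with coefficients in $K$ (resp. $k(t)$). An operator of positive order is irreducible if it has no right-hand factor of order strictly between $0$ and its own order. *)

From HB Require Import structures.
From mathcomp Require Import all_boot all_order all_algebra.
From mathcomp Require Import mpoly.
Set Implicit Arguments. Unset Strict Implicit. Unset Printing Implicit Defensive.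
Import GRing.Theory.
Local Open Scope ring_scope.

Notation "x %:F" := (@FracField.tofrac _ x) : ring_scope.

(* K = k(t, x_1, ..., x_n): fraction field of k[X_0, ..., X_n], with t = X_0 *)
Definition Kfield (k : closedFieldType) (n : nat) : fieldType :=
  {fraction {mpoly k[n.+1]}}.

Definition tvar (n : nat) : 'I_n.+1 := ord0.

Definition Dpoly (k : closedFieldType) (n : nat) (p : {mpoly k[n.+1]}) :
  {mpoly k[n.+1]} := mderiv (tvar n) p.

Definition Dt (k : closedFieldType) (n : nat) (x : Kfield k n) : Kfield k n :=
  let r := repr x in
  let a := (frac r).1 in let b := (frac r).2 in
  ((Dpoly a * b - a * Dpoly b)%:F) / ((b ^+ 2)%:F).

Definition tpoly (k : closedFieldType) (n : nat) (p : {poly k}) : {mpoly k[n.+1]} :=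
  \sum_(i < size p) p`_i *: 'X_(tvar n) ^+ i.

Definition in_kt (k : closedFieldType) (n : nat) (x : Kfield k n) : Prop :=
  exists p q : {poly k}, q != 0 /\ x = (tpoly n p)%:F / (tpoly n q)%:F.

(* Differential operators sum_i a_i d^i (coefficients on the left) over a
   differential field (F, D) are represented by their coefficient lists
   {poly F}; the variable 'X stands for the derivation symbol d.
   The (noncommutative) product is given by the Leibniz rule
   d^i b = sum_l C(i,l) D^l(b) d^(i-l). *)
Definition opmul (F : fieldType) (D : F -> F) (P Q : {poly F}) : {poly F} :=
  \sum_(i < size P) \sum_(l < i.+1)
     (P`_i * ('C(i, l))%:R) *: (map_poly (iter l D) Q * 'X^(i - l)).

Definition ord_op (F : fieldType) (P : {poly F}) : nat := (size P).-1.

Definition coeffs_in (F : fieldType) (S : F -> Prop) (P : {poly F}) : Prop :=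
  forall i, S P`_i.

Definition right_factor_in (F : fieldType) (S : F -> Prop) (D : F -> F)
  (Q P : {poly F}) : Prop :=
  coeffs_in S Q /\ exists R, coeffs_in S R /\ P = opmul D R Q.

Definition irreducible_op_in (F : fieldType) (S : F -> Prop) (D : F -> F)
  (P : {poly F}) : Prop :=
  (0 < ord_op P)%N /\
  forall Q, right_factor_in S D Q P -> ~ (1 <= ord_op Q < ord_op P)%N.

From HB Require Import structures.
From mathcomp Require Import all_boot all_order all_algebra.
From mathcomp Require Import mpoly ring.
From Stdlib Require Import ClassicalEpsilon.
Set Implicit Arguments. Unset Strict Implicit. Unset Printing Implicit Defensive.
Import GRing.Theory.
Local Open Scope ring_scope.

(* Suppose P = R Q in K<d> with 1 <= ord Q < ord P.  The coefficients of R and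
   Q involve finitely many denominators; since k is infinite (being
   algebraically closed) we can pick constants c_1, ..., c_n in k at which
   none of these denominators, nor the numerator of the leading coefficient
   of Q, vanishes.  The substitution x_i := c_i is then a ring morphism from
   the local ring of fractions "defined at c" to k(t); it commutes with d/dt
   and fixes k(t).  Since operator multiplication is functorial along such
   morphisms, applying it to P = R Q yields a factorization of P in k(t)<d>
   whose right factor has the order of Q, contradicting irreducibility over
   k(t). *)

Definition opmul_ring (A : comNzRingType) (D : A -> A) (P Q : {poly A}) :
  {poly A} :=
  \sum_(i < size P) \sum_(l < i.+1)
     (P`_i * ('C(i, l))%:R) *: (map_poly (iter l D) Q * 'X^(i - l)).

Lemma opmul_ringE (F : fieldType) (D : F -> F) (P Q : {poly F}) :
  opmul D P Q = opmul_ring D P Q.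
Proof. by []. Qed.

Lemma opmul_ring_widen (A : comNzRingType) (D : A -> A) (P Q : {poly A}) N :
  (size P <= N)%N -> opmul_ring D P Q = \sum_(i < N) \sum_(l < i.+1)
     (P`_i * ('C(i, l))%:R) *: (map_poly (iter l D) Q * 'X^(i - l)).
Proof.
move=> lePN; rewrite /opmul_ring (big_ord_widen _ (fun i => \sum_(l < i.+1)
  (P`_i * ('C(i, l))%:R) *: (map_poly (iter l D) Q * 'X^(i - l))) lePN).
rewrite big_mkcond /=.
apply: eq_bigr => i _; case: ltnP => // lePi.
by rewrite big1 // => l _; rewrite nth_default // mul0r scale0r.
Qed.

Lemma opmul_ring_map (A B : comNzRingType) (f : {rmorphism A -> B})
    (DA : A -> A) (DB : B -> B) :
  DB 0 = 0 -> (forall x, f (DA x) = DB (f x)) ->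
  forall P Q, map_poly f (opmul_ring DA P Q) =
              opmul_ring DB (map_poly f P) (map_poly f Q).
Proof.
move=> DB0 fD P Q.
have iterD l x : f (iter l DA x) = iter l DB (f x).
  by elim: l => //= l IHl; rewrite fD IHl.
have iterDB0 l : iter l DB 0 = 0 by elim: l => //= l ->.
rewrite [RHS](opmul_ring_widen _ _ (size_poly _ _)) /opmul_ring rmorph_sum.
apply: eq_bigr => i _; rewrite rmorph_sum; apply: eq_bigr => l _.
change (map_poly f ((P`_i * 'C(i, l)%:R) *: (map_poly (iter l DA) Q * 'X^(i - l)))
  = ((map_poly f P)`_i * 'C(i, l)%:R) *:
    (map_poly (iter l DB) (map_poly f Q) * 'X^(i - l))).
rewrite map_polyZ (rmorphM (map_poly f)); congr (_ *: (_ * _)).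
- by rewrite coef_map rmorphM rmorph_nat.
- apply: etrans (esym (map_poly_comp_id0 _ _ (rmorph0 f))) _.
  by rewrite -map_poly_comp_id0 ?iterDB0 //; apply: eq_map_poly => x; exact: iterD.
- by rewrite (rmorphXn (map_poly f)); congr (_ ^+ _); exact: map_polyX.
Qed.

Lemma mpoly_subring_ind (R : nzRingType) (m : nat) (Pr : {mpoly R[m]} -> Prop) :
  (forall c, Pr c%:MP) -> (forall i, Pr 'X_i) ->
  (forall p q, Pr p -> Pr q -> Pr (p + q)) ->
  (forall p q, Pr p -> Pr q -> Pr (p * q)) ->
  forall p, Pr p.
Proof.
move=> PC PX PD PM p; elim/mpolyind: p => [|c mm p _ _ IHp].
  by rewrite -mpolyC0.
apply: PD IHp; rewrite -mul_mpolyC; apply: (PM) => //.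
rewrite mpolyXE_id; apply: big_ind; [by rewrite -mpolyC1 | exact: PM |].
move=> i _; elim: (mm i) => [|e IHe]; first by rewrite expr0 -mpolyC1.
by rewrite exprS; apply: PM.
Qed.

Lemma mpoly_morph_eq (R : nzRingType) (A : nzRingType) (m : nat)
    (f g : {mpoly R[m]} -> A) :
  {morph f : x y / x + y} -> {morph f : x y / x * y} ->
  {morph g : x y / x + y} -> {morph g : x y / x * y} ->
  (forall c, f c%:MP = g c%:MP) -> (forall i, f 'X_i = g 'X_i) -> f =1 g.
Proof.
move=> fD fM gD gM fgC fgX; apply: mpoly_subring_ind => // p q fgp fgq.
- by rewrite fD gD fgp fgq.
- by rewrite fM gM fgp fgq.
Qed.

(* Viewing a polynomial in m + 1 variables as a polynomial in the last one
   with coefficients in the first m. *)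
Section LastVariable.
Variables (R : comNzRingType) (m : nat).

Definition last_var (i : 'I_m.+1) : {poly {mpoly R[m]}} :=
  if unlift ord_max i is Some j then ('X_j)%:P else 'X.

Definition muni_last (p : {mpoly R[m.+1]}) : {poly {mpoly R[m]}} :=
  mmap (@polyC _ \o @mpolyC m R) last_var p.

Lemma muni_lastK (p : {mpoly R[m.+1]}) :
  (map_poly (@mwiden m R) (muni_last p)).['X_ord_max] = p.
Proof.
pose B (q : {poly {mpoly R[m]}}) := (map_poly (@mwiden m R) q).['X_ord_max].
apply: (@mpoly_morph_eq _ _ _ (B \o muni_last) id) => // [x y|x y|c|i] /=.
- by rewrite /B /muni_last !rmorphD hornerD.
- by rewrite /B /muni_last !rmorphM hornerM.
- by rewrite /B /muni_last mmapC map_polyC hornerC /= mwidenC.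
rewrite /B /muni_last mmapX mmap1U /last_var.
case: unliftP => [j ->|->]; last by rewrite map_polyX hornerX.
rewrite map_polyC hornerC /= mwidenX mnmwiden1; congr 'X_[U_(_)].
by apply: val_inj; rewrite /= /bump leqNgt ltn_ord.
Qed.

Definition extend_last (w : 'I_m -> R) (t : R) (i : 'I_m.+1) : R :=
  if unlift ord_max i is Some j then w j else t.

Lemma meval_muni_last (w : 'I_m -> R) (t : R) (p : {mpoly R[m.+1]}) :
  p.@[extend_last w t] = (map_poly (meval w) (muni_last p)).[t].
Proof.
apply: (@mpoly_morph_eq _ _ _ (meval _) (fun p => _.[t])) => [x y|x y|x y|x y|c|i].
- exact: mevalD.
- exact: mevalM.
- by rewrite /muni_last !rmorphD hornerD.
- by rewrite /muni_last !rmorphM hornerM.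
- by rewrite mevalC /muni_last mmapC map_polyC hornerC /= mevalC.
rewrite mevalXU /muni_last mmapX mmap1U /last_var /extend_last.
case: unliftP => [j _|_]; last by rewrite map_polyX hornerX.
by rewrite map_polyC hornerC; exact: (esym (mevalXU _ _)).
Qed.

End LastVariable.

(* An algebraically closed field is infinite: a nonzero polynomial has a
   non-root, namely any root of q * 'X + 1. *)
Lemma exists_nonroot (k : closedFieldType) (q : {poly k}) :
  q != 0 -> exists t, q.[t] != 0.
Proof.
move=> nz_q; have size_q1 : size (q * 'X + 1) != 1%N.
  by rewrite size_MXaddC (negbTE nz_q) /= eqSS -lt0n size_poly_gt0.
have [t /rootP] := closed_rootP _ size_q1.
rewrite hornerD hornerM hornerX hornerC => qt1; exists t.
by apply: contraPneq qt1 => ->; rewrite mul0r add0r; apply/eqP; exact: oner_neq0.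
Qed.

Lemma exists_nonzero_value (k : closedFieldType) (m : nat) (p : {mpoly k[m]}) :
  p != 0 -> exists w : 'I_m -> k, p.@[w] != 0.
Proof.
elim: m p => [|m IHm] p nz_p.
  exists (fun _ => 0); rewrite (nvar0_mpolyC p) mevalC.
  by apply: contra nz_p => /eqP p0; rewrite (nvar0_mpolyC p) p0 mpolyC0.
have nz_up : muni_last p != 0.
  by apply: contraNneq nz_p => up0; rewrite -(muni_lastK p) up0 map_poly0 horner0.
have [w nz_lead] : exists w, (lead_coef (muni_last p)).@[w] != 0.
  by apply: IHm; rewrite lead_coef_eq0.
have nz_wp : map_poly (meval w) (muni_last p) != 0.
  by rewrite -lead_coef_eq0 lead_coef_map_id0 // meval0.
have [t nz_t] := exists_nonroot nz_wp.
by exists (extend_last w t); rewrite meval_muni_last.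
Qed.

Lemma frac_repr (R : idomainType) (x : {fraction R}) :
  x = (\n_(repr x))%:F / (\d_(repr x))%:F.
Proof.
rewrite -[x in LHS]reprK; unlock tofrac.
rewrite -[_^-1]/(FracField.inv _) -[_ * _]/(FracField.mul _ _) !piE.
apply/eqmodP; rewrite /= FracField.equivfE.
rewrite !numden_Ratio ?oner_neq0 ?denom_ratioP ?mulf_neq0 ?oner_neq0 ?denom_ratioP //.
by rewrite !mulr1 !mul1r mulrC.
Qed.

Lemma frac_eq (R : idomainType) (a b a' b' : R) : b != 0 -> b' != 0 ->
  (a%:F / b%:F == a'%:F / b'%:F :> {fraction R}) = (a * b' == a' * b).
Proof. by move=> nz_b nz_b'; rewrite eqr_div ?tofrac_eq0 // -!tofracM tofrac_eq. Qed.

Lemma frac_sub (R : idomainType) (a b a' b' : R) : b != 0 -> b' != 0 ->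
  a%:F / b%:F - a'%:F / b'%:F = (a * b' - a' * b)%:F / (b * b')%:F :> {fraction R}.
Proof.
move=> nz_b nz_b'; rewrite tofracB !tofracM -mulNr addf_div ?tofrac_eq0 //.
by rewrite mulNr.
Qed.

Section DerivationOnK.
Variables (k : closedFieldType) (n : nat).
Local Notation MP := {mpoly k[n.+1]}.
Local Notation D := (@Dpoly k n).

Lemma tpolyE (p : {poly k}) :
  tpoly n p = (map_poly (@mpolyC _ k) p).['X_(tvar n)].
Proof.
rewrite /tpoly horner_coef size_map_inj_poly //; last exact: (can_inj (@mpolyCK _ _)).
by apply: eq_bigr => i _; rewrite coef_map /= mul_mpolyC.
Qed.

Lemma tpoly_zmod : zmod_morphism (@tpoly k n).
Proof. by move=> p q; rewrite !tpolyE rmorphB hornerD hornerN. Qed.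

Lemma tpoly_monoid : monoid_morphism (@tpoly k n).
Proof.
by split=> [|p q]; rewrite !tpolyE ?rmorph1 ?hornerC // rmorphM hornerM.
Qed.

HB.instance Definition _ := GRing.isZmodMorphism.Build _ _ _ tpoly_zmod.
HB.instance Definition _ := GRing.isMonoidMorphism.Build _ _ _ tpoly_monoid.

Lemma tpolyC (c : k) : tpoly n c%:P = c%:MP.
Proof. by rewrite tpolyE map_polyC hornerC. Qed.

Lemma tpolyX : @tpoly k n 'X = 'X_(tvar n).
Proof. by rewrite tpolyE map_polyX hornerX. Qed.

Lemma DpolyD : {morph D : p q / p + q}.
Proof. by move=> p q; rewrite /Dpoly mderivD. Qed.

Lemma DpolyM (p q : MP) : D (p * q) = D p * q + p * D q.
Proof. by rewrite /Dpoly mderivM. Qed.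

Lemma DpolyC (c : k) : D c%:MP = 0.
Proof. by rewrite /Dpoly mderivC. Qed.

Lemma DpolyX (i : 'I_n.+1) : D 'X_i = (i == tvar n)%:R.
Proof.
rewrite /Dpoly mderivX mnm1E; case: eqP => [->|_]; last by rewrite scale0r.
have -> : (U_(tvar n) - U_(tvar n))%MM = 0%MM.
  by apply/mnmP => j; rewrite mnmBE subnn mnmE.
by rewrite mpolyX0 scale1r.
Qed.

Lemma Dpoly_tpoly (p : {poly k}) : D (tpoly n p) = tpoly n p^`().
Proof.
elim/poly_ind: p => [|p c IHp]; first by rewrite deriv0 rmorph0 /Dpoly mderiv0.
rewrite derivMXaddC !rmorphD !rmorphM /= tpolyC tpolyX DpolyD DpolyM DpolyC IHp.
by rewrite DpolyX eqxx addr0 mulr1 addrC.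
Qed.

Lemma Dt_frac (a b : MP) : b != 0 ->
  Dt (a%:F / b%:F) = ((D a * b - a * D b)%:F) / ((b ^+ 2)%:F).
Proof.
move=> nz_b; rewrite /Dt; set x := (a%:F / b%:F : Kfield k n).
have nz_b' := denom_ratioP (repr x); have ex := frac_repr x.
move: (\n_(repr x)) (\d_(repr x)) nz_b' ex => a' b' nz_b' ex.
have /eqP eq_ab : a * b' == a' * b by rewrite -frac_eq // -ex.
have eqD_ab : D a * b' + a * D b' = D a' * b + a' * D b by rewrite -!DpolyM eq_ab.
apply/eqP; rewrite frac_eq ?expf_neq0 // -subr_eq0; apply/eqP.
transitivity (- (b * b' * ((D a * b' + a * D b') - (D a' * b + a' * D b)) +
                 (a' * b - a * b') * (b' * D b + b * D b'))); first by ring.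
by rewrite eqD_ab eq_ab !subrr mulr0 mul0r addr0 oppr0.
Qed.

Lemma Dt0 : Dt (0 : Kfield k n) = 0.
Proof.
rewrite -[0 : Kfield k n](mul0r (1%:F)^-1) -tofrac0 Dt_frac ?oner_eq0 //.
by rewrite /Dpoly mderiv0 !mul0r subrr tofrac0 mul0r.
Qed.

End DerivationOnK.

(* Specialization at a point c : 'I_n.+1 -> k: each variable x_i (i other
   than tvar n) is replaced by the constant c i, while t stays a variable;
   the coordinate c (tvar n) is only used in xsubst_meval. *)
Section Specialization.
Variables (k : closedFieldType) (n : nat) (c : 'I_n.+1 -> k).
Local Notation MP := {mpoly k[n.+1]}.
Local Notation K := (Kfield k n).
Local Notation D := (@Dpoly k n).

Definition subst_var (i : 'I_n.+1) : {poly k} :=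
  if i == tvar n then 'X else (c i)%:P.

Definition xsubst (p : MP) : {poly k} := mmap (@polyC k) subst_var p.

HB.instance Definition _ := GRing.RMorphism.copy xsubst (mmap (@polyC k) subst_var).

Definition spec (p : MP) : MP := tpoly n (xsubst p).

HB.instance Definition _ := GRing.RMorphism.copy spec (@tpoly k n \o xsubst).

Lemma xsubstC (a : k) : xsubst a%:MP = a%:P.
Proof. exact: mmapC. Qed.

Lemma xsubstX (i : 'I_n.+1) : xsubst 'X_i = subst_var i.
Proof. by rewrite /xsubst mmapX mmap1U. Qed.

Lemma xsubst_tpoly (p : {poly k}) : xsubst (tpoly n p) = p.
Proof.
elim/poly_ind: p => [|p a IHp]; first by rewrite !rmorph0.
rewrite rmorphD rmorphM /= tpolyC tpolyX rmorphD rmorphM /= xsubstC xsubstX IHp.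
by rewrite /subst_var eqxx.
Qed.

Lemma xsubst_meval (p : MP) : (xsubst p).[c (tvar n)] = p.@[c].
Proof.
apply: (@mpoly_morph_eq _ _ _ (fun p => (xsubst p).[_]) (meval c))
  => [x y|x y|x y|x y|a|i].
- by rewrite rmorphD hornerD.
- by rewrite rmorphM hornerM.
- exact: mevalD.
- exact: mevalM.
- by rewrite xsubstC hornerC mevalC.
by rewrite xsubstX mevalXU /subst_var; case: eqP => [->|_]; rewrite ?hornerX ?hornerC.
Qed.

Lemma xsubst_Dpoly (p : MP) : xsubst (D p) = (xsubst p)^`().
Proof.
elim/mpoly_subring_ind: p => [a|i|p q IHp IHq|p q IHp IHq].
- by rewrite DpolyC xsubstC derivC rmorph0.
- rewrite DpolyX xsubstX /subst_var rmorph_nat.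
  by case: eqP => _; rewrite ?derivX ?derivC.
- by rewrite DpolyD !rmorphD /= IHp IHq derivD.
- by rewrite DpolyM rmorphD !rmorphM /= IHp IHq derivM.
Qed.

Lemma spec_Dpoly (p : MP) : spec (D p) = D (spec p).
Proof. by rewrite /spec xsubst_Dpoly Dpoly_tpoly. Qed.

Lemma spec_tpoly (p : {poly k}) : spec (tpoly n p) = tpoly n p.
Proof. by rewrite /spec xsubst_tpoly. Qed.

Lemma spec_neq0 (p : MP) : spec p != 0 -> p != 0.
Proof. by apply: contraNneq => ->; rewrite rmorph0. Qed.

Definition defined_at (y : K) : Prop :=
  exists ab : MP * MP, spec ab.2 != 0 /\ y = ab.1%:F / ab.2%:F.

(* its boolean reflection, needed to form the subring *)
Definition definedb (y : K) : bool :=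
  if excluded_middle_informative (defined_at y) then true else false.

Lemma definedP (y : K) : reflect (defined_at y) (definedb y).
Proof. by rewrite /definedb; case: excluded_middle_informative => h; constructor. Qed.

Lemma defined_frac (a b : MP) : spec b != 0 -> definedb (a%:F / b%:F).
Proof. by move=> nz_b; apply/definedP; exists (a, b). Qed.

(* the value at c of a fraction defined at c, computed on a chosen
   representative; specF_frac shows it does not depend on the choice *)
Definition specF (y : K) : K :=
  let ab := epsilon (inhabits (0, 1))
              (fun ab : MP * MP => spec ab.2 != 0 /\ y = ab.1%:F / ab.2%:F) in
  (spec ab.1)%:F / (spec ab.2)%:F.

Lemma specF_frac (a b : MP) : spec b != 0 ->
  specF (a%:F / b%:F) = (spec a)%:F / (spec b)%:F.
Proof.
move=> nz_b; rewrite /specF /=.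
have := epsilon_spec (inhabits (0, 1)) (fun ab : MP * MP =>
  spec ab.2 != 0 /\ a%:F / b%:F = ab.1%:F / ab.2%:F)
  (ex_intro _ (a, b) (conj nz_b erefl)).
move: (epsilon _ _) => [a' b'] /= [nz_b' /eqP].
rewrite eq_sym !frac_eq ?(spec_neq0 nz_b) ?(spec_neq0 nz_b') // => /eqP eq_ab.
by apply/eqP; rewrite frac_eq // -!rmorphM eq_ab.
Qed.

Lemma defined_subring : subring_closed definedb.
Proof.
split.
- have -> : (1 : K) = 1%:F / 1%:F by rewrite tofrac1 divr1.
  by apply: defined_frac; rewrite rmorph1 oner_eq0.
- move=> _ _ /definedP [[a b] /= [nz_b ->]] /definedP [[a' b'] /= [nz_b' ->]].
  rewrite frac_sub ?(spec_neq0 nz_b) ?(spec_neq0 nz_b') //.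
  by apply: defined_frac; rewrite rmorphM mulf_neq0.
- move=> _ _ /definedP [[a b] /= [nz_b ->]] /definedP [[a' b'] /= [nz_b' ->]].
  by rewrite mulf_div -!tofracM; apply: defined_frac; rewrite rmorphM mulf_neq0.
Qed.

Lemma specF_sub (x y : K) : definedb x -> definedb y ->
  specF (x - y) = specF x - specF y.
Proof.
move=> /definedP [[a b] /= [nz_b ->]] /definedP [[a' b'] /= [nz_b' ->]].
have nz_bb' : spec (b * b') != 0 by rewrite rmorphM mulf_neq0.
rewrite frac_sub ?(spec_neq0 nz_b) ?(spec_neq0 nz_b') //.
rewrite (specF_frac _ nz_bb') (specF_frac _ nz_b) (specF_frac _ nz_b').
by rewrite frac_sub // rmorphB !rmorphM.
Qed.

Lemma specF_mul (x y : K) : definedb x -> definedb y ->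
  specF (x * y) = specF x * specF y.
Proof.
move=> /definedP [[a b] /= [nz_b ->]] /definedP [[a' b'] /= [nz_b' ->]].
have nz_bb' : spec (b * b') != 0 by rewrite rmorphM mulf_neq0.
rewrite mulf_div -!tofracM (specF_frac _ nz_bb') (specF_frac _ nz_b).
by rewrite (specF_frac _ nz_b') mulf_div -!tofracM !rmorphM.
Qed.

Lemma specF1 : specF 1 = 1.
Proof.
have -> : (1 : K) = 1%:F / 1%:F by rewrite tofrac1 divr1.
by rewrite specF_frac rmorph1 ?oner_eq0 // tofrac1 divr1.
Qed.

Lemma specF0 : specF 0 = 0.
Proof.
have defined1 : definedb 1 by case: defined_subring.
by rewrite -[X in specF X](subrr (1 : K)) specF_sub // subrr.
Qed.

Lemma defined_Dt (y : K) : definedb y -> definedb (Dt y).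
Proof.
move=> /definedP [[a b] /= [nz_b ->]]; rewrite Dt_frac ?(spec_neq0 nz_b) //.
by rewrite defined_frac // rmorphXn expf_neq0.
Qed.

Lemma specF_Dt (y : K) : definedb y -> specF (Dt y) = Dt (specF y).
Proof.
move=> /definedP [[a b] /= [nz_b ->]]; rewrite Dt_frac ?(spec_neq0 nz_b) //.
rewrite specF_frac ?rmorphXn ?expf_neq0 // specF_frac // Dt_frac //.
by rewrite rmorphB !rmorphM /= !spec_Dpoly.
Qed.

Lemma specF_in_kt (y : K) : definedb y -> in_kt (specF y).
Proof.
move=> /definedP [[a b] /= [nz_b ->]]; rewrite specF_frac //.
exists (xsubst a), (xsubst b); split => //.
by apply: contraNneq nz_b => b0; rewrite /spec b0 rmorph0.
Qed.

Lemma specF_kt (y : K) : in_kt y -> definedb y /\ specF y = y.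
Proof.
move=> [p [q [nz_q ->]]]; have nz_sq : spec (tpoly n q) != 0.
  rewrite spec_tpoly; apply: contraNneq nz_q => q0.
  by rewrite -(xsubst_tpoly q) q0 rmorph0.
by rewrite defined_frac // specF_frac // !spec_tpoly.
Qed.

HB.instance Definition _ := GRing.isSubringClosed.Build K definedb defined_subring.

Record local_ring := LocalElt { local_val : K; local_valP : definedb local_val }.
HB.instance Definition _ := [isSub for local_val].
HB.instance Definition _ := [Choice of local_ring by <:].
HB.instance Definition _ := [SubChoice_isSubComNzRing of local_ring by <:].

Definition local_Dt (y : local_ring) : local_ring :=
  LocalElt (defined_Dt (local_valP y)).

Definition local_spec (y : local_ring) : K := specF (local_val y).

Lemma local_spec_zmod : zmod_morphism local_spec.
Proof.
by move=> x y; rewrite /local_spec -specF_sub ?local_valP.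
Qed.

Lemma local_spec_monoid : monoid_morphism local_spec.
Proof.
split=> [|x y]; last by rewrite /local_spec -specF_mul ?local_valP.
by rewrite /local_spec -[local_val 1]/(val (1 : local_ring)) rmorph1 specF1.
Qed.

HB.instance Definition _ := GRing.isZmodMorphism.Build _ _ _ local_spec_zmod.
HB.instance Definition _ := GRing.isMonoidMorphism.Build _ _ _ local_spec_monoid.

Lemma specF_poly_in_kt (p : {poly K}) : (forall i, definedb p`_i) ->
  coeffs_in (@in_kt k n) (map_poly specF p).
Proof. by move=> def_p i; rewrite coef_map_id0 ?specF0 //; exact: specF_in_kt. Qed.

Lemma defined_coefs (p : {poly K}) :
  {in (p : seq K), forall x, definedb x} -> forall i, definedb p`_i.
Proof.
move=> def_p i; case: (ltnP i (size p)) => [lt_ip|le_pi].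
  by rewrite def_p ?mem_nth.
by rewrite nth_default //; exact: rpred0.
Qed.

Lemma lift_poly (p : {poly K}) : (forall i, definedb p`_i) ->
  exists p' : {poly local_ring}, map_poly val p' = p.
Proof.
move=> def_p; exists (\poly_(i < size p) insubd (0 : local_ring) p`_i).
apply/polyP => i; rewrite coef_map_id0 ?rmorph0 // coef_poly.
case: (ltnP i (size p)) => [_|le_pi].
- exact: (insubdK _ (def_p i)).
- by rewrite rmorph0 nth_default.
Qed.

Lemma specialize_factorization (P R Q : {poly K}) :
  coeffs_in (@in_kt k n) P -> (forall i, definedb R`_i) ->
  (forall i, definedb Q`_i) -> P = opmul (@Dt k n) R Q ->
  P = opmul (@Dt k n) (map_poly specF R) (map_poly specF Q).
Proof.
move=> P_kt /lift_poly [R' <-] /lift_poly [Q' <-] eqP.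
have map_spec p : map_poly specF (map_poly val p) = map_poly local_spec p.
  by rewrite -map_poly_comp_id0 ?specF0.
have specP : map_poly specF P = P.
  by apply/polyP => i; rewrite coef_map_id0 ?specF0 //; case: (specF_kt (P_kt i)).
have spec_mul := opmul_ring_map (f := local_spec) (DA := local_Dt)
  (Dt0 k n) (fun y => specF_Dt (local_valP y)).
have val_mul := opmul_ring_map (f := val) (DA := local_Dt) (Dt0 k n) (fun y => erefl).
rewrite !opmul_ringE !map_spec -spec_mul -map_spec val_mul -opmul_ringE -eqP.
exact: esym specP.
Qed.

End Specialization.

Lemma exists_spec_neq0 (k : closedFieldType) (n : nat) (g : {mpoly k[n.+1]}) :
  g != 0 -> exists c, spec c g != 0.
Proof.
move=> /exists_nonzero_value [c nz_gc]; exists c.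
apply: contraNneq nz_gc => gc0; rewrite -xsubst_meval.
by rewrite -[xsubst c g](xsubst_tpoly c) -/(spec c g) gc0 !rmorph0 horner0.
Qed.

Lemma exists_regular_spec (k : closedFieldType) (n : nat) (s : seq (Kfield k n)) :
  exists c, {in s, forall x, definedb c x /\ (x != 0 -> specF c x != 0)}.
Proof.
pose g := \prod_(x <- s) \d_(repr x) * \prod_(x <- s | x != 0) \n_(repr x).
have nz_num (x : Kfield k n) : x != 0 -> \n_(repr x) != 0.
  by apply: contraNneq => num0; rewrite (frac_repr x) num0 tofrac0 mul0r.
have nz_g : g != 0.
  rewrite mulf_neq0 // prodf_seq_neq0; apply/allP => x _ /=.
  - exact: denom_ratioP.
  - exact/implyP/nz_num.
have [c] := exists_spec_neq0 nz_g; rewrite rmorphM !rmorph_prod mulf_eq0 negb_or.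
rewrite !prodf_seq_neq0 => /andP [/allP nz_den /allP nz_num_c].
exists c => x sx; have nz_dx := nz_den x sx.
split; first by rewrite (frac_repr x) (defined_frac _ nz_dx).
move=> /(implyP (nz_num_c x sx)) nz_nx.
rewrite (frac_repr x) (specF_frac _ nz_dx) mulf_eq0 invr_eq0 !tofrac_eq0.
by rewrite negb_or nz_nx.
Qed.

Theorem mainTheorem12 (k : closedFieldType) (k_char0 : [pchar k] =i pred0)
  (n : nat) (P : {poly Kfield k n}) :
  coeffs_in (@in_kt k n) P ->
  irreducible_op_in (@in_kt k n) (@Dt k n) P ->
  irreducible_op_in (fun _ : Kfield k n => True) (@Dt k n) P.
Proof.
move=> P_kt [ordP irrP]; split => // Q [_ [R [_ eqP]]] ordQ.
have nz_lQ : lead_coef Q != 0.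
  by rewrite lead_coef_eq0; apply: contraTneq ordQ => ->; rewrite /ord_op size_poly0.
have [c reg_c] := exists_regular_spec (lead_coef Q :: R ++ Q).
have def_R : forall i, definedb c R`_i.
  apply: defined_coefs => x R_x.
  by have [] := reg_c x; rewrite // inE mem_cat R_x orbT.
have def_Q : forall i, definedb c Q`_i.
  apply: defined_coefs => x Q_x.
  by have [] := reg_c x; rewrite // inE mem_cat Q_x !orbT.
apply: (irrP (map_poly (specF c) Q)).
  split; first exact: specF_poly_in_kt.
  exists (map_poly (specF c) R); split; first exact: specF_poly_in_kt.
  exact: specialize_factorization.
have [_ nz_slQ] := reg_c _ (mem_head _ _).
by rewrite /ord_op size_map_poly_id0 ?(nz_slQ nz_lQ).
Qed.
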